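(* Let $q\ge1$ and assume Hypothesis (H$_q$). Then for all $x\in[a,b]$ and $\lambda\in[0,1]$, $$\Big|(1-\lambda)f(mx)+\lambda\frac{(x-a)f(ma)+(b-x)f(mb)}{b-a}-\frac{1}{m(b-a)}\int_{ma}^{mb}f(t)\,dt\Big|\le\frac{mA_1(1,\lambda)^{1-\frac1q}}{b-a}\Big\{(x-a)^2\Big(|f'(mx)|^qA_2(\alpha,1,\lambda)+m|f'(a)|^qA_3(\alpha,1,\lambda)\Big)^{\frac1q}+(b-x)^2\Big(|f'(mx)|^qA_2(\alpha,1,\lambda)+m|f'(b)|^qA_3(\alpha,1,\lambda)\Big)^{\frac1q}\Big\}.$$
   Context: $(\alpha,m)$-convexity: for $(\alpha,m)\in[0,1]\times(0,1]$ and an interval $K\subseteq[0,\infty)$, a function $g:K\to\mathbb{R}$ is $(\alpha,m)$-convex on $K$ if $g(tX+m(1-t)Y)\le t^\alpha g(X)+m(1-t^\alpha)g(Y)$ for all $X,Y\in K$ and $t\in[0,1]$ with $tX+m(1-t)Y\in K$ (convention $0^0=1$). Hypothesis (H$_q$): $I\subseteq[0,\infty)$ is an interval, $f:I\to\mathbb{R}$ is differentiable on the interior $I^\circ$, $m\in(0,1]$, $\alpha\in[0,1]$, $a<b$ with $ma,b\in I^\circ$, $f'$ is Lebesgue integrable on $[ma,mb]$, and $|f'|^q$ is $(\alpha,m)$-convex on $[ma,b]$. Constants: $A_1(\theta,\lambda)=\frac{2\theta\lambda^{1+\frac1\theta}+1}{\theta+1}-\lambda$, $A_2(\alpha,\theta,\lambda)=\frac{2\theta\lambda^{1+\frac{1+\alpha}{\theta}}}{(\alpha+1)(\alpha+\theta+1)}+\frac{1}{\alpha+\theta+1}-\frac{\lambda}{\alpha+1}$,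 $A_3(\alpha,\theta,\lambda)=A_1(\theta,\lambda)-A_2(\alpha,\theta,\lambda)$. *)

From Stdlib Require Import Reals Lra.
Open Scope R_scope.

Definition rpow (x y : R) : R :=
  if Req_EM_T x 0 then (if Req_EM_T y 0 then 1 else 0) else Rpower x y.

Definition is_interval (I : R -> Prop) : Prop :=
  forall x y z, I x -> I z -> x <= y <= z -> I y.

(* Interior points: we use the Stdlib notion Rtopology.interior (open-neighbourhood interior). *)

Definition alpha_m_convex (alpha m : R) (K : R -> Prop) (g : R -> R) : Prop :=
  forall X Y t, K X -> K Y -> 0 <= t <= 1 ->
    K (t * X + m * (1 - t) * Y) ->
    g (t * X + m * (1 - t) * Y) <= rpow t alpha * g X + m * (1 - rpow t alpha) * g Y.

Definition A_1 (theta lambda : R) : R :=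
  (2 * theta * rpow lambda (1 + 1 / theta) + 1) / (theta + 1) - lambda.

Definition A_2 (alpha theta lambda : R) : R :=
  2 * theta * rpow lambda (1 + (1 + alpha) / theta) / ((alpha + 1) * (alpha + theta + 1))
  + 1 / (alpha + theta + 1) - lambda / (alpha + 1).

Definition A_3 (alpha theta lambda : R) : R :=
  A_1 theta lambda - A_2 alpha theta lambda.

From Coquelicot Require Import Coquelicot.
From Stdlib Require Import Reals Lra.
Open Scope R_scope.

(* For an endpoint e in {a, b} follow f along the segment seg t = t (m x) + m (1 - t) e,
   t in [0,1].  With J a primitive of f, the function
       h(t) = (x - e) (t - lambda) f(seg t) - J(seg t) / m
   has h'(t) = m (x - e)^2 (t - lambda) f'(seg t), and the expression inside the absolute
   value of the theorem equals (X_a - X_b) / (b - a) with X_e = h(1) - h(0).  Each |X_e| is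
   bounded without integrals and without Hoelder's inequality: for every s > 0 the tangent
   line of the concave map y |-> y^(1/q) at s, combined with (alpha,m)-convexity, gives
   |f'(seg t)| <= c0 + c1 (t^alpha G + m (1 - t^alpha) G_e), hence
   |h'(t)| <= |t - lambda| (P + Q t^alpha).  Comparing h with an explicit primitive of this
   weight (mean value theorem) yields |h(1) - h(0)| <= P A_1(1,lambda) + Q A_2(alpha,1,lambda),
   and the best choice of s turns this into A_1^(1-1/q) (G A_2 + m G_e A_3)^(1/q). *)

Lemma le_of_deriv_nonneg (g dg : R -> R) (c d : R) : c <= d ->
  (forall t, c < t < d -> is_derive g t (dg t)) ->
  (forall t, c <= t <= d -> continuity_pt g t) ->
  (forall t, c < t < d -> 0 <= dg t) -> g c <= g d.
Proof.
  intros Hcd Hder Hcont Hpos.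
  destruct (Req_dec c d) as [<-|Hne]; [lra|].
  pose (pr := fun t (Ht : c < t < d) =>
    exist (derivable_pt_abs g t) (dg t) (proj1 (is_derive_Reals g t (dg t)) (Hder t Ht))).
  destruct (MVT g id c d pr (fun t _ => derivable_pt_id t)) as [z [Hz Hmvt]].
  - lra.
  - exact Hcont.
  - intros t _. apply derivable_continuous_pt, derivable_pt_id.
  - simpl in Hmvt. rewrite derive_pt_id in Hmvt. unfold id in Hmvt.
    assert (0 <= (d - c) * dg z) by (apply Rmult_le_pos; [lra | apply Hpos, Hz]).
    lra.
Qed.

Lemma increment_le_of_deriv_bound (u v du dv : R -> R) (c d : R) : c <= d ->
  (forall t, c < t < d -> is_derive u t (du t)) ->
  (forall t, c < t < d -> is_derive v t (dv t)) ->
  (forall t, c <= t <= d -> continuity_pt u t) ->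
  (forall t, c <= t <= d -> continuity_pt v t) ->
  (forall t, c < t < d -> Rabs (dv t) <= du t) ->
  Rabs (v d - v c) <= u d - u c.
Proof.
  intros Hcd Hu Hv Cu Cv Hb.
  assert (Hminus : u c - v c <= u d - v d).
  { apply (le_of_deriv_nonneg (fun t => u t - v t) (fun t => du t - dv t)); auto.
    - intros t Ht. apply (is_derive_minus u v); auto.
    - intros t Ht. apply continuity_pt_minus; auto.
    - intros t Ht. specialize (Hb t Ht). apply Rabs_le_between in Hb. lra. }
  assert (Hplus : u c + v c <= u d + v d).
  { apply (le_of_deriv_nonneg (fun t => u t + v t) (fun t => du t + dv t)); auto.
    - intros t Ht. apply (is_derive_plus u v); auto.
    - intros t Ht. apply continuity_pt_plus; auto.
    - intros t Ht. specialize (Hb t Ht). apply Rabs_le_between in Hb. lra. }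
  apply Rabs_le. lra.
Qed.

Lemma continuity_pt_of_is_derive (h : R -> R) (t l : R) :
  is_derive h t l -> continuity_pt h t.
Proof. intros H. apply derivable_continuous_pt. exists l. apply is_derive_Reals, H. Qed.

Lemma ball_R_between (x e y : R) : ball x e y -> x - e < y < x + e.
Proof.
  intros H. unfold ball in H; simpl in H; unfold AbsRing_ball, abs, minus, plus, opp in H.
  simpl in H. apply Rabs_def2 in H. lra.
Qed.

(* The power t^beta on t > 0, extended by 0: unlike [Rpower] it is continuous at 0 for
   beta > 0, which the primitives of t^alpha below need. *)
Definition pospow (beta t : R) : R := if Rlt_dec 0 t then Rpower t beta else 0.

Lemma pospow_pos (beta t : R) : 0 < t -> pospow beta t = Rpower t beta.
Proof. intros H. unfold pospow. destruct (Rlt_dec 0 t); lra. Qed.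

Lemma pospow_0 (beta : R) : pospow beta 0 = 0.
Proof. unfold pospow. destruct (Rlt_dec 0 0); lra. Qed.

Lemma is_derive_pospow (beta t : R) : 0 < t ->
  is_derive (pospow beta) t (beta * Rpower t (beta - 1)).
Proof.
  intros Ht.
  apply is_derive_ext_loc with (f := fun y => Rpower y beta).
  - assert (Hr : 0 < t / 2) by lra.
    exists (mkposreal _ Hr). intros y Hy. apply ball_R_between in Hy.
    simpl in Hy. rewrite pospow_pos; lra.
  - apply is_derive_Reals, derivable_pt_lim_power, Ht.
Qed.

Lemma continuity_pospow (beta t : R) : 0 < beta -> continuity_pt (pospow beta) t.
Proof.
  intros Hb. destruct (Rtotal_order t 0) as [Hneg|[->|Hpos]].
  - intros eps Heps. exists (- t). split; [lra|].
    intros y [_ Hy]. apply Rabs_def2 in Hy. simpl in Hy.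
    unfold pospow. destruct (Rlt_dec 0 y); [lra|]. destruct (Rlt_dec 0 t); [lra|].
    rewrite R_dist_eq. exact Heps.
  - intros eps Heps. exists (Rpower eps (1 / beta)). split; [apply exp_pos|].
    intros y [_ Hy]. simpl in *. unfold R_dist in *. rewrite pospow_0, Rminus_0_r in *.
    unfold pospow. destruct (Rlt_dec 0 y) as [Hy0|Hy0].
    + rewrite Rabs_pos_eq in * by (left; try apply exp_pos; lra).
      apply Rlt_le_trans with (Rpower (Rpower eps (1 / beta)) beta).
      * apply Rlt_Rpower_l; auto.
      * rewrite Rpower_mult. replace (1 / beta * beta) with 1 by (field; lra).
        rewrite Rpower_1; lra.
    + rewrite Rabs_R0. exact Heps.
  - apply continuity_pt_of_is_derive with (beta * Rpower t (beta - 1)).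
    apply is_derive_pospow, Hpos.
Qed.

Lemma Rpower_1_l (y : R) : Rpower 1 y = 1.
Proof. unfold Rpower. rewrite ln_1, Rmult_0_r. apply exp_0. Qed.

Lemma Rpower_plus_1 (t b : R) : 0 < t -> Rpower t (b + 1) = t * Rpower t b.
Proof. intros Ht. rewrite Rpower_plus, Rpower_1 by exact Ht. ring. Qed.

Lemma rpow_of_pos (x y : R) : 0 < x -> rpow x y = Rpower x y.
Proof. intros Hx. unfold rpow. destruct (Req_EM_T x 0); [lra | reflexivity]. Qed.

Lemma rpow_0_l (y : R) : y <> 0 -> rpow 0 y = 0.
Proof. intros Hy. unfold rpow. destruct (Req_EM_T 0 0); [|lra]. destruct (Req_EM_T y 0); lra. Qed.

Lemma rpow_ge0 (x y : R) : 0 <= rpow x y.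
Proof.
  unfold rpow. destruct (Req_EM_T x 0); [destruct (Req_EM_T y 0); lra | left; apply exp_pos].
Qed.

Section WeightedIncrement.
Variables (P Q alpha lambda : R).
Hypotheses (Halpha : 0 <= alpha) (Hlambda : 0 <= lambda <= 1).

Definition weight_primitive (t : R) : R :=
  P * (t * t / 2 - lambda * t)
  + Q * (pospow (alpha + 2) t / (alpha + 2) - lambda * (pospow (alpha + 1) t / (alpha + 1))).

Lemma weight_primitive_0 : weight_primitive 0 = 0.
Proof. unfold weight_primitive. rewrite !pospow_0. field. lra. Qed.

Lemma continuity_weight_primitive (t : R) : continuity_pt weight_primitive t.
Proof.
  assert (C2 := continuity_pospow (alpha + 2) t ltac:(lra)).
  assert (C1 := continuity_pospow (alpha + 1) t ltac:(lra)).
  assert (Cp : continuity_pt (fun t => t * t / 2 - lambda * t) t).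
  { apply continuity_pt_of_is_derive with (t - lambda). auto_derive; [auto | field]. }
  assert (Cc : forall c, continuity_pt (fun _ => c) t).
  { intros c. apply continuity_pt_const. intros ??. reflexivity. }
  unfold weight_primitive.
  apply continuity_pt_plus; apply continuity_pt_mult; [apply Cc | exact Cp | apply Cc |].
  apply continuity_pt_minus; apply continuity_pt_mult; [exact C2 | apply Cc | apply Cc |].
  apply continuity_pt_mult; [exact C1 | apply Cc].
Qed.

Lemma is_derive_weight_primitive (t : R) : 0 < t ->
  is_derive weight_primitive t ((t - lambda) * (P + Q * Rpower t alpha)).
Proof.
  intros Ht. unfold weight_primitive.
  pose proof (is_derive_pospow (alpha + 2) t Ht) as D2.
  pose proof (is_derive_pospow (alpha + 1) t Ht) as D1.
  auto_derive.
  - split; [eexists; exact D2 | split; [eexists; exact D1 | exact I]].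
  - replace (Derive (fun x => pospow (alpha + 2) x) t) with ((alpha + 2) * Rpower t (alpha + 2 - 1))
      by (symmetry; apply is_derive_unique, D2).
    replace (Derive (fun x => pospow (alpha + 1) x) t) with ((alpha + 1) * Rpower t (alpha + 1 - 1))
      by (symmetry; apply is_derive_unique, D1).
    replace (alpha + 2 - 1) with (alpha + 1) by ring.
    replace (alpha + 1 - 1) with alpha by ring.
    rewrite Rpower_plus_1 by exact Ht. field. lra.
Qed.

(* The values at 1 and at the sign change lambda produce the constants A_1 and A_2. *)
Lemma weight_primitive_values :
  weight_primitive 1 - 2 * weight_primitive lambda = P * A_1 1 lambda + Q * A_2 alpha 1 lambda.
Proof.
  unfold weight_primitive, A_1, A_2.
  rewrite !(pospow_pos _ 1), !Rpower_1_l by lra.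
  replace (1 + 1 / 1) with (INR 2) by (simpl; field).
  replace (1 + (1 + alpha) / 1) with (alpha + 1 + 1) by field.
  destruct (Req_dec lambda 0) as [->|Hne].
  - rewrite !pospow_0, !rpow_0_l by (simpl; lra). field. lra.
  - rewrite !rpow_of_pos, !pospow_pos by lra. rewrite Rpower_pow by lra.
    replace (alpha + 2) with (alpha + 1 + 1) by ring.
    rewrite (Rpower_plus_1 lambda (alpha + 1)) by lra.
    field. lra.
Qed.

(* Integrating the weight |t - lambda| (P + Q t^alpha) over [0,1] gives P A_1 + Q A_2:
   a function whose derivative is dominated by this weight has increment at most that. *)
Lemma increment_le_weighted (h dh : R -> R) :
  (forall t, 0 <= t <= 1 -> continuity_pt h t) ->
  (forall t, 0 < t < 1 -> is_derive h t (dh t)) ->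
  (forall t, 0 < t < 1 -> Rabs (dh t) <= Rabs (t - lambda) * (P + Q * Rpower t alpha)) ->
  Rabs (h 1 - h 0) <= P * A_1 1 lambda + Q * A_2 alpha 1 lambda.
Proof.
  intros Hc Hd Hb.
  set (F := weight_primitive).
  (* the weight has sign (t - lambda): compare h with -F on [0,lambda] and with F on [lambda,1] *)
  assert (Left : Rabs (h lambda - h 0) <= - F lambda - - F 0).
  { apply (increment_le_of_deriv_bound (fun t => - F t) h
             (fun t => - ((t - lambda) * (P + Q * Rpower t alpha))) dh); try lra.
    - intros t Ht. apply (is_derive_opp F). apply is_derive_weight_primitive. lra.
    - intros t Ht. apply Hd. lra.
    - intros t Ht. apply (continuity_pt_opp F), continuity_weight_primitive.
    - intros t Ht. apply Hc. lra.
    - intros t Ht. rewrite Ropp_mult_distr_l, <- (Rabs_left1 (t - lambda)) by lra.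
      apply Hb. lra. }
  assert (Right : Rabs (h 1 - h lambda) <= F 1 - F lambda).
  { apply (increment_le_of_deriv_bound F h
             (fun t => (t - lambda) * (P + Q * Rpower t alpha)) dh); try lra.
    - intros t Ht. apply is_derive_weight_primitive. lra.
    - intros t Ht. apply Hd. lra.
    - intros t Ht. apply continuity_weight_primitive.
    - intros t Ht. apply Hc. lra.
    - intros t Ht. rewrite <- (Rabs_pos_eq (t - lambda)) at 1 by lra. apply Hb. lra. }
  unfold F in *. rewrite weight_primitive_0 in Left. rewrite <- weight_primitive_values.
  replace (h 1 - h 0) with ((h lambda - h 0) + (h 1 - h lambda)) by ring.
  eapply Rle_trans; [apply Rabs_triang | lra].
Qed.

End WeightedIncrement.

(* A_1(1,lambda) = lambda^2 + 1/2 - lambda = int_0^1 |t - lambda| dt > 0. *)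
Lemma A_1_pos (lambda : R) : 0 <= lambda <= 1 -> 0 < A_1 1 lambda.
Proof.
  intros H. unfold A_1. replace (1 + 1 / 1) with (INR 2) by (simpl; field).
  destruct (Req_dec lambda 0) as [->|Hne].
  - rewrite rpow_0_l by (simpl; lra). lra.
  - rewrite rpow_of_pos, Rpower_pow by lra. simpl. nra.
Qed.

(* A_2 = int_0^1 |t - lambda| t^alpha dt and A_3 = int_0^1 |t - lambda| (1 - t^alpha) dt
   are nonnegative: apply [increment_le_weighted] to the zero function. *)
Lemma A_2_ge0 (alpha lambda : R) : 0 <= alpha -> 0 <= lambda <= 1 -> 0 <= A_2 alpha 1 lambda.
Proof.
  intros Halpha Hlambda.
  assert (H := increment_le_weighted 0 1 alpha lambda Halpha Hlambda (fun _ => 0) (fun _ => 0)).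
  rewrite Rminus_0_r, Rabs_R0, Rmult_0_l, Rplus_0_l, Rmult_1_l in H. apply H.
  - intros t _. apply continuity_pt_const. intros ??. reflexivity.
  - intros t _. apply (is_derive_const (V := R_NormedModule)).
  - intros t _. apply Rmult_le_pos; [apply Rabs_pos |].
    left. rewrite Rplus_0_l, Rmult_1_l. apply exp_pos.
Qed.

Lemma A_3_ge0 (alpha lambda : R) : 0 <= alpha -> 0 <= lambda <= 1 -> 0 <= A_3 alpha 1 lambda.
Proof.
  intros Halpha Hlambda.
  assert (H := increment_le_weighted 1 (-1) alpha lambda Halpha Hlambda (fun _ => 0) (fun _ => 0)).
  rewrite Rminus_0_r, Rabs_R0 in H. unfold A_3.
  enough (0 <= 1 * A_1 1 lambda + -1 * A_2 alpha 1 lambda) by lra. apply H.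
  - intros t _. apply continuity_pt_const. intros ??. reflexivity.
  - intros t _. apply (is_derive_const (V := R_NormedModule)).
  - intros t Ht. apply Rmult_le_pos; [apply Rabs_pos |].
    assert (Rpower t alpha <= Rpower 1 alpha) by (apply Rle_Rpower_l; lra).
    rewrite Rpower_1_l in *. lra.
Qed.

Lemma rpow_rpow_inv (y q : R) : 0 <= y -> 0 < q -> rpow (rpow y q) (1 / q) = y.
Proof.
  intros Hy Hq. assert (Hq' : 1 / q <> 0) by (apply Rgt_not_eq, Rdiv_lt_0_compat; lra).
  destruct (Req_dec y 0) as [->|Hne].
  - rewrite !rpow_0_l by lra. reflexivity.
  - rewrite (rpow_of_pos y), rpow_of_pos, Rpower_mult by (try apply exp_pos; lra).
    replace (q * (1 / q)) with 1 by (field; lra). apply Rpower_1. lra.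
Qed.

Lemma rpow_le_compat_l (u w e : R) : 0 <= u <= w -> 0 < e -> rpow u e <= rpow w e.
Proof.
  intros Hu He. destruct (Req_dec u 0) as [->|Hne].
  - rewrite rpow_0_l by lra. apply rpow_ge0.
  - rewrite !rpow_of_pos by lra. apply Rle_Rpower_l; lra.
Qed.

Lemma Rpower_le_affine (y p : R) : 0 < y -> 0 <= p <= 1 -> Rpower y p <= p * y + (1 - p).
Proof.
  intros Hy Hp. unfold Rpower. set (c := p * ln y).
  (* tangent line of exp at c, evaluated at ln y and at 0 *)
  assert (Tan : forall z, exp c * (1 + (z - c)) <= exp z).
  { intros z. replace z with (c + (z - c)) at 2 by ring. rewrite exp_plus.
    apply Rmult_le_compat_l; [left; apply exp_pos | apply exp_ineq1_le]. }
  assert (H1 := Tan (ln y)). assert (H0 := Tan 0).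
  rewrite exp_ln in H1 by exact Hy. rewrite exp_0 in H0.
  assert (p * (exp c * (1 + (ln y - c))) <= p * y) by (apply Rmult_le_compat_l; lra).
  assert ((1 - p) * (exp c * (1 + (0 - c))) <= (1 - p) * 1) by (apply Rmult_le_compat_l; lra).
  assert (p * (exp c * (1 + (ln y - c))) + (1 - p) * (exp c * (1 + (0 - c))) = exp c)
    by (unfold c; ring).
  lra.
Qed.

Lemma rpow_le_tangent (v s p : R) : 0 <= v -> 0 < s -> 0 < p <= 1 ->
  rpow v p <= (1 - p) * Rpower s p + p * Rpower s (p - 1) * v.
Proof.
  intros Hv Hs Hp. assert (Hsp : 0 < Rpower s p) by apply exp_pos.
  destruct (Req_dec v 0) as [->|Hne].
  - rewrite rpow_0_l by lra. assert (0 <= (1 - p) * Rpower s p) by (apply Rmult_le_pos; lra).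
    lra.
  - assert (Hvs : 0 < v / s) by (apply Rdiv_lt_0_compat; lra).
    replace (rpow v p) with (Rpower s p * Rpower (v / s) p).
    + replace ((1 - p) * Rpower s p + p * Rpower s (p - 1) * v)
        with (Rpower s p * (p * (v / s) + (1 - p))).
      * apply Rmult_le_compat_l; [lra | apply Rpower_le_affine; lra].
      * unfold Rminus at 3. rewrite Rpower_plus, Rpower_Ropp, Rpower_1 by exact Hs.
        field. lra.
    + rewrite rpow_of_pos, Rpower_mult_distr by lra. f_equal. field. lra.
Qed.

Lemma tangent_family_at_ratio (A S p : R) : 0 < A -> 0 < S ->
  (1 - p) * Rpower (S / A) p * A + p * Rpower (S / A) (p - 1) * S
  = Rpower A (1 - p) * Rpower S p.
Proof.
  intros HA HS. unfold Rpower.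
  unfold Rdiv. rewrite ln_mult, ln_Rinv by (try apply Rinv_0_lt_compat; lra).
  rewrite <- (exp_ln A) at 2 by exact HA. rewrite <- (exp_ln S) at 3 by exact HS.
  rewrite <- !exp_plus, Rmult_assoc, <- exp_plus, Rmult_assoc, <- exp_plus.
  replace (p * (ln S + - ln A) + ln A) with ((1 - p) * ln A + p * ln S) by ring.
  replace ((p - 1) * (ln S + - ln A) + ln S) with ((1 - p) * ln A + p * ln S) by ring.
  ring.
Qed.

Lemma nonpos_of_le_Rpower (X K p : R) : 0 <= K -> 0 < p ->
  (forall s, 0 < s -> X <= K * Rpower s p) -> X <= 0.
Proof.
  intros HK Hp H. destruct (Rle_dec X 0) as [|HX]; [assumption | exfalso].
  destruct (Req_dec K 0) as [->|HK0].
  - specialize (H 1 ltac:(lra)). lra.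
  - assert (Hr : 0 < X / (2 * K)) by (apply Rdiv_lt_0_compat; lra).
    specialize (H (Rpower (X / (2 * K)) (1 / p)) ltac:(apply exp_pos)).
    rewrite Rpower_mult in H. replace (1 / p * p) with 1 in H by (field; lra).
    rewrite Rpower_1 in H by exact Hr.
    replace (K * (X / (2 * K))) with (X / 2) in H by (field; lra). lra.
Qed.

(* Minimising the tangent-line bounds over s > 0. *)
Lemma le_of_tangent_family (X c A S p : R) : 0 <= c -> 0 < A -> 0 <= S -> 0 < p <= 1 ->
  (forall s, 0 < s -> X <= c * ((1 - p) * Rpower s p * A + p * Rpower s (p - 1) * S)) ->
  X <= c * (rpow A (1 - p) * rpow S p).
Proof.
  intros Hc HA HS Hp H. destruct (Req_dec S 0) as [->|HS0].
  - rewrite (rpow_0_l p), !Rmult_0_r by lra.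
    apply (nonpos_of_le_Rpower X (c * (1 - p) * A) p); [| lra |].
    + apply Rmult_le_pos; [apply Rmult_le_pos|]; lra.
    + intros s Hs. specialize (H s Hs). lra.
  - rewrite !rpow_of_pos, <- tangent_family_at_ratio by lra.
    apply H. apply Rdiv_lt_0_compat; lra.
Qed.

(* For each s > 0 the tangent line
   of y^(1/q) at s turns the bound on g^q into a weight handled by [increment_le_weighted];
   minimising over s concludes. *)
Lemma increment_le_convexity_bound (h dh g : R -> R) (m alpha lambda q k G H : R) :
  0 <= m -> 0 <= alpha -> 0 <= lambda <= 1 -> 1 <= q -> 0 <= k -> 0 <= G -> 0 <= H ->
  (forall t, 0 <= t <= 1 -> continuity_pt h t) ->
  (forall t, 0 < t < 1 -> is_derive h t (dh t)) ->
  (forall t, 0 < t < 1 -> Rabs (dh t) <= k * Rabs (t - lambda) * g t) ->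
  (forall t, 0 < t < 1 -> 0 <= g t) ->
  (forall t, 0 < t < 1 -> rpow (g t) q <= rpow t alpha * G + m * (1 - rpow t alpha) * H) ->
  Rabs (h 1 - h 0)
  <= k * (rpow (A_1 1 lambda) (1 - 1 / q)
          * rpow (G * A_2 alpha 1 lambda + m * H * A_3 alpha 1 lambda) (1 / q)).
Proof.
  intros Hm Halpha Hlambda Hq Hk HG HH Hcont Hder Hdh Hg0 Hgq.
  assert (Hp : 0 < 1 / q <= 1).
  { split; [apply Rdiv_lt_0_compat; lra|]. apply Rmult_le_reg_r with q; [lra|].
    unfold Rdiv. rewrite Rmult_assoc, Rinv_l by lra. lra. }
  set (p := 1 / q) in *.
  assert (HA1 := A_1_pos lambda Hlambda).
  assert (HA2 := A_2_ge0 alpha lambda Halpha Hlambda).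
  assert (HA3 := A_3_ge0 alpha lambda Halpha Hlambda).
  apply le_of_tangent_family; [exact Hk | exact HA1 | | exact Hp | intros s Hs].
  { apply Rplus_le_le_0_compat; repeat apply Rmult_le_pos; lra. }
  set (c0 := (1 - p) * Rpower s p). set (c1 := p * Rpower s (p - 1)).
  assert (Hc1 : 0 <= c1) by (left; apply Rmult_lt_0_compat; [lra | apply exp_pos]).
  assert (Hg : forall t, 0 < t < 1 ->
            g t <= c0 + c1 * (Rpower t alpha * G + m * (1 - Rpower t alpha) * H)).
  { intros t Ht. specialize (Hgq t Ht). rewrite (rpow_of_pos t) in Hgq by lra.
    rewrite <- (rpow_rpow_inv (g t) q) by (try apply Hg0; lra). fold p.
    eapply Rle_trans.
    - apply rpow_le_compat_l; [split; [apply rpow_ge0 | exact Hgq] | lra].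
    - apply rpow_le_tangent; [| exact Hs | exact Hp].
      eapply Rle_trans; [apply rpow_ge0 | exact Hgq]. }
  replace (k * (c0 * A_1 1 lambda + c1 * (G * A_2 alpha 1 lambda + m * H * A_3 alpha 1 lambda)))
    with (k * (c0 + c1 * m * H) * A_1 1 lambda + k * c1 * (G - m * H) * A_2 alpha 1 lambda)
    by (unfold A_3; ring).
  apply (increment_le_weighted _ _ alpha lambda Halpha Hlambda h dh Hcont Hder).
  intros t Ht. eapply Rle_trans; [apply Hdh, Ht|].
  replace (Rabs (t - lambda) * (k * (c0 + c1 * m * H) + k * c1 * (G - m * H) * Rpower t alpha))
    with (k * Rabs (t - lambda) * (c0 + c1 * (Rpower t alpha * G + m * (1 - Rpower t alpha) * H)))
    by ring.
  apply Rmult_le_compat_l; [apply Rmult_le_pos; [exact Hk | apply Rabs_pos] | apply Hg, Ht].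
Qed.

Lemma interior_open_interval (I : R -> Prop) (u v : R) : is_interval I ->
  interior I u -> interior I v -> u <= v ->
  exists lo hi, lo < u /\ v < hi /\ forall y, lo < y < hi -> interior I y.
Proof.
  intros HI [du Hu] [dv Hv] Huv.
  assert (Hdu := cond_pos du). assert (Hdv := cond_pos dv).
  assert (Hin : forall y, u - du < y < v + dv -> I y).
  { intros y Hy. apply (HI (Rmin y u) y (Rmax y v)).
    - apply Hu. unfold disc. apply Rabs_def1; unfold Rmin; destruct (Rle_dec y u); lra.
    - apply Hv. unfold disc. apply Rabs_def1; unfold Rmax; destruct (Rle_dec y v); lra.
    - split; [apply Rmin_l | apply Rmax_l]. }
  exists (u - du), (v + dv). split; [lra | split; [lra|]].
  intros y Hy. assert (Hr : 0 < Rmin (y - (u - du)) (v + dv - y)) by (apply Rmin_glb_lt; lra).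
  exists (mkposreal _ Hr). intros z Hz. unfold disc in Hz; simpl in Hz. apply Rabs_def2 in Hz.
  assert (Hl := Rmin_l (y - (u - du)) (v + dv - y)).
  assert (Hr' := Rmin_r (y - (u - du)) (v + dv - y)).
  apply Hin. lra.
Qed.

Lemma is_derive_RInt_open (f : R -> R) (lo hi c u : R) :
  (forall y, lo < y < hi -> continuous f y) -> lo < c < hi -> lo < u < hi ->
  is_derive (fun w => RInt f c w) u (f u).
Proof.
  intros Hf Hc Hu. apply (is_derive_RInt f _ c u); [| apply Hf, Hu].
  assert (Hr : 0 < Rmin (u - lo) (hi - u)) by (apply Rmin_glb_lt; lra).
  exists (mkposreal _ Hr). intros y Hy. apply ball_R_between in Hy. simpl in Hy.
  assert (Hl := Rmin_l (u - lo) (hi - u)). assert (Hr' := Rmin_r (u - lo) (hi - u)).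
  apply (RInt_correct f c y), (ex_RInt_continuous f). intros z Hz. apply Hf.
  unfold Rmin, Rmax in Hz. destruct (Rle_dec c y); lra.
Qed.

Lemma local_primitive (I : R -> Prop) (f df : R -> R) (u v : R) : is_interval I ->
  (forall t, interior I t -> derivable_pt_lim f t (df t)) ->
  interior I u -> interior I v -> u <= v ->
  exists lo hi, lo < u /\ v < hi /\
    (forall y, lo < y < hi -> is_derive f y (df y)) /\
    (forall y, lo < y < hi -> is_derive (fun w => RInt f u w) y (f y)).
Proof.
  intros HI Hdf Hu Hv Huv.
  destruct (interior_open_interval I u v HI Hu Hv Huv) as (lo & hi & Hlo & Hhi & Hint).
  assert (Hf : forall y, lo < y < hi -> is_derive f y (df y))
    by (intros y Hy; apply is_derive_Reals, Hdf, Hint, Hy).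
  exists lo, hi. split; [exact Hlo | split; [exact Hhi | split; [exact Hf |]]].
  intros y Hy. apply (is_derive_RInt_open f lo hi); [| lra | exact Hy].
  intros z Hz. apply continuity_pt_filterlim, (continuity_pt_of_is_derive _ _ _ (Hf z Hz)).
Qed.

Definition seg (m x e t : R) : R := t * (m * x) + m * (1 - t) * e.

Lemma seg_range (m a b x e t : R) : 0 < m -> a <= x <= b -> a <= e <= b -> 0 <= t <= 1 ->
  m * a <= seg m x e t <= m * b.
Proof.
  intros Hm Hx He Ht. unfold seg.
  assert (a <= t * x + (1 - t) * e <= b) by nra.
  replace (t * (m * x) + m * (1 - t) * e) with (m * (t * x + (1 - t) * e)) by ring.
  split; apply Rmult_le_compat_l; lra.
Qed.

(* With J a primitive of f, the auxiliary function along the segment,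
   h(t) = (x - e)(t - lambda) f(seg t) - J(seg t) / m,
   has derivative m (x - e)^2 (t - lambda) f'(seg t): the J-term cancels the f-term. *)
Definition seg_aux (f J : R -> R) (m x e lambda t : R) : R :=
  (x - e) * (t - lambda) * f (seg m x e t) - J (seg m x e t) / m.

Lemma is_derive_seg_aux (f df J : R -> R) (m x e lambda t : R) : 0 < m ->
  is_derive f (seg m x e t) (df (seg m x e t)) -> is_derive J (seg m x e t) (f (seg m x e t)) ->
  is_derive (seg_aux f J m x e lambda) t
    (m * (x - e) ^ 2 * (t - lambda) * df (seg m x e t)).
Proof.
  intros Hm Hf HJ. unfold seg_aux, seg in *. auto_derive.
  - split; [eexists; exact Hf | split; [eexists; exact HJ | exact I]].
  - replace (1 + - t) with (1 - t) by ring.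
    replace (Derive (fun y => f y) (t * (m * x) + m * (1 - t) * e))
      with (df (t * (m * x) + m * (1 - t) * e)) by (symmetry; apply is_derive_unique, Hf).
    replace (Derive (fun y => J y) (t * (m * x) + m * (1 - t) * e))
      with (f (t * (m * x) + m * (1 - t) * e)) by (symmetry; apply is_derive_unique, HJ).
    field. lra.
Qed.

Lemma segment_estimate (f df J : R -> R) (lo hi m alpha lambda q a b x e : R) :
  (forall y, lo < y < hi -> is_derive f y (df y)) ->
  (forall y, lo < y < hi -> is_derive J y (f y)) ->
  lo < m * a -> b < hi -> 0 <= a -> a <= x <= b -> a <= e <= b ->
  0 < m <= 1 -> 0 <= alpha -> 0 <= lambda <= 1 -> 1 <= q ->
  alpha_m_convex alpha m (fun t => m * a <= t <= b) (fun t => rpow (Rabs (df t)) q) ->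
  Rabs ((x - e) * (1 - lambda) * f (m * x) + (x - e) * lambda * f (m * e)
        - (J (m * x) - J (m * e)) / m)
  <= m * (x - e) ^ 2 * (rpow (A_1 1 lambda) (1 - 1 / q)
      * rpow (rpow (Rabs (df (m * x))) q * A_2 alpha 1 lambda
              + m * rpow (Rabs (df e)) q * A_3 alpha 1 lambda) (1 / q)).
Proof.
  intros Hf HJ Hlo Hhi Ha Hx He Hm Halpha Hlambda Hq Hconv.
  assert (Hmb : m * b <= b) by nra.
  assert (Hseg : forall t, 0 <= t <= 1 -> m * a <= seg m x e t <= b).
  { intros t Ht. assert (H := seg_range m a b x e t ltac:(lra) Hx He Ht). lra. }
  assert (Hder : forall t, 0 <= t <= 1 -> is_derive (seg_aux f J m x e lambda) t
                   (m * (x - e) ^ 2 * (t - lambda) * df (seg m x e t))).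
  { intros t Ht. specialize (Hseg t Ht).
    apply is_derive_seg_aux; [lra | apply Hf | apply HJ]; lra. }
  assert (Hends : seg_aux f J m x e lambda 1 - seg_aux f J m x e lambda 0
                  = (x - e) * (1 - lambda) * f (m * x) + (x - e) * lambda * f (m * e)
                    - (J (m * x) - J (m * e)) / m).
  { unfold seg_aux, seg.
    replace (1 * (m * x) + m * (1 - 1) * e) with (m * x) by ring.
    replace (0 * (m * x) + m * (1 - 0) * e) with (m * e) by ring.
    field. lra. }
  rewrite <- Hends.
  apply (increment_le_convexity_bound _ (fun t => m * (x - e) ^ 2 * (t - lambda) * df (seg m x e t))
           (fun t => Rabs (df (seg m x e t))));
    try apply rpow_ge0; try lra.
  - apply Rmult_le_pos; [lra | apply pow2_ge_0].
  - intros t Ht. apply (continuity_pt_of_is_derive _ _ _ (Hder t Ht)).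
  - intros t Ht. apply Hder. lra.
  - intros t Ht. rewrite !Rabs_mult, (Rabs_pos_eq m), (Rabs_pos_eq ((x - e) ^ 2))
      by (try apply pow2_ge_0; lra). lra.
  - intros t Ht. apply Rabs_pos.
  - intros t Ht. specialize (Hseg t ltac:(lra)). unfold seg in *.
    apply Hconv; try lra; nra.
Qed.

Lemma abs_diff_div_le (Xa Xb Ba Bb d : R) : 0 < d -> Rabs Xa <= Ba -> Rabs Xb <= Bb ->
  Rabs ((Xa - Xb) / d) <= (Ba + Bb) / d.
Proof.
  intros Hd Ha Hb. unfold Rdiv.
  rewrite Rabs_mult, (Rabs_pos_eq (/ d)) by (left; apply Rinv_0_lt_compat, Hd).
  apply Rmult_le_compat_r; [left; apply Rinv_0_lt_compat, Hd |].
  replace (Xa - Xb) with (Xa + - Xb) by ring.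
  eapply Rle_trans; [apply Rabs_triang | rewrite Rabs_Ropp; lra].
Qed.

Theorem mainTheorem3
  (I : R -> Prop) (f df : R -> R) (m alpha a b q x lambda : R)
  (HI : is_interval I) (HIpos : forall t, I t -> 0 <= t)
  (Hdf : forall t, interior I t -> derivable_pt_lim f t (df t))
  (Hm : 0 < m <= 1) (Halpha : 0 <= alpha <= 1) (Hab : a < b)
  (Hma : interior I (m * a)) (Hb : interior I b)
  (Hconv : alpha_m_convex alpha m (fun t => m * a <= t <= b)
             (fun t => rpow (Rabs (df t)) q))
  (Hq : 1 <= q) (Hx : a <= x <= b) (Hlambda : 0 <= lambda <= 1)
  (pr : Riemann_integrable f (m * a) (m * b)) :
  (Rabs ((1 - lambda) * f (m * x)
        + lambda * (((x - a) * f (m * a) + (b - x) * f (m * b)) / (b - a))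
        - 1 / (m * (b - a)) * RiemannInt pr)
  <= m * rpow (A_1 1 lambda) (1 - 1 / q) / (b - a) *
     ((x - a) ^ 2 * rpow (rpow (Rabs (df (m * x))) q * A_2 alpha 1 lambda
                          + m * rpow (Rabs (df a)) q * A_3 alpha 1 lambda) (1 / q)
      + (b - x) ^ 2 * rpow (rpow (Rabs (df (m * x))) q * A_2 alpha 1 lambda
                          + m * rpow (Rabs (df b)) q * A_3 alpha 1 lambda) (1 / q)))%R.
Proof.
  assert (Ha : 0 <= a) by (assert (H := HIpos _ (interior_P1 I _ Hma)); nra).
  destruct (local_primitive I f df (m * a) b HI Hdf Hma Hb ltac:(nra))
    as (lo & hi & Hlo & Hhi & Hf & HJ).
  set (J := fun w => RInt f (m * a) w) in HJ.
  assert (Ea := segment_estimate f df J lo hi m alpha lambda q a b x a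
                  Hf HJ Hlo Hhi Ha Hx ltac:(lra) Hm (proj1 Halpha) Hlambda Hq Hconv).
  assert (Eb := segment_estimate f df J lo hi m alpha lambda q a b x b
                  Hf HJ Hlo Hhi Ha Hx ltac:(lra) Hm (proj1 Halpha) Hlambda Hq Hconv).
  assert (J0 : J (m * a) = 0) by apply (RInt_point (m * a) f).
  rewrite J0 in Ea. rewrite <- (RInt_Reals f (m * a) (m * b) pr). fold (J (m * b)).
  set (Xa := (x - a) * (1 - lambda) * f (m * x) + _ - _) in Ea.
  set (Xb := (x - b) * (1 - lambda) * f (m * x) + _ - _) in Eb.
  replace ((1 - lambda) * f (m * x) + _ - _) with ((Xa - Xb) / (b - a))
    by (unfold Xa, Xb; field; lra).
  eapply Rle_trans; [apply (abs_diff_div_le _ _ _ _ (b - a) ltac:(lra) Ea Eb) |].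
  right. replace ((b - x) ^ 2) with ((x - b) ^ 2) by ring. field. lra.
Qed.
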